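(* Let $F$ be a random variable with $0\le F\le M$ for some $M>0$, and suppose $\mathbb{E}[F]\le2e^{-M}$. Then $\mathbb{E}[e^F]\le1+\sqrt{8e^M\mathbb{E}[F]}$. *)

From HB Require Import structures.
From mathcomp Require Import all_boot all_order all_algebra.
From mathcomp Require Import all_classical all_reals all_analysis.

From HB Require Import structures.
From mathcomp Require Import all_boot all_order all_algebra.
From mathcomp Require Import all_classical all_reals all_analysis.
From mathcomp Require Import measurable_realfun.
From mathcomp Require Import lra.
Import Order.TTheory GRing.Theory Num.Theory.
Local Open Scope ring_scope.
Local Open Scope ereal_scope.

(* On [0, M] the exponential lies below the line 1 + e^M x, so
   E[e^F] <= 1 + e^M E[F].  The hypothesis E[F] <= 2 e^-M makes a := e^M E[F]
   at most 2, and any 0 <= a <= 8 satisfies a <= sqrt (8 a). *)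

Lemma expR_le1Dmul_expR (R : realType) (M x : R) :
  (0 <= x <= M)%R -> (expR x <= 1 + expR M * x)%R.
Proof.
case/andP=> x_ge0 x_leM.
have expR_le1Dmul : (expR x <= 1 + x * expR x)%R.
  have e_inv : (expR (- x) * expR x = 1)%R by rewrite -expRD addNr expR0.
  have := expR_ge1Dx (- x); have := expR_gt0 x; nra.
apply: (le_trans expR_le1Dmul); rewrite lerD2l mulrC ler_wpM2r //.
by rewrite ler_expR.
Qed.

Lemma self_le_sqrt_mul (R : rcfType) (a c : R) :
  (0 <= a <= c)%R -> (a <= Num.sqrt (c * a))%R.
Proof.
case/andP=> a_ge0 a_lec.
rewrite -[leLHS](ger0_norm a_ge0) -sqrtr_sqr ler_sqrt; last first.
  by rewrite mulr_ge0 // (le_trans a_ge0).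
by rewrite expr2 ler_wpM2r.
Qed.

Lemma ge0_expectation_affine (d : measure_display) (T : measurableType d)
    (R : realType) (P : probability T R) (X : T -> R) (a b : R) :
    measurable_fun setT X -> (forall x, 0 <= X x)%R -> (0 <= a)%R -> (0 <= b)%R ->
  'E_P[fun x => a + b * X x]%R = a%:E + b%:E * 'E_P[X].
Proof.
move=> mX X_ge0 a_ge0 b_ge0; rewrite !expectation.unlock.
under eq_integral do rewrite EFinD EFinM.
rewrite ge0_integralD //=; last 2 first.
- by move=> x _; rewrite -EFinM lee_fin mulr_ge0.
- by apply/measurable_EFinP; exact: measurable_funM.
rewrite integral_cst //= probability_setT mule1 ge0_integralZl //=.
- exact/measurable_EFinP.
- by move=> x _; rewrite lee_fin.
Qed.

Theorem lemma8 (d : measure_display) (T : measurableType d) (R : realType)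
  (P : probability T R) (F : {RV P >-> R}) (M : R)
  (hM : (0 < M)%R)
  (hF : forall x, (0 <= F x <= M)%R)
  (hE : 'E_P[F] <= (2 * expR (- M))%:E) :
  'E_P[fun x => expR (F x)] <= (1 + Num.sqrt (8 * expR M * fine 'E_P[F]))%:E.
Proof.
have F_ge0 x : (0 <= F x)%R by case/andP: (hF x).
have EF_ge0 : 0 <= 'E_P[F] by exact: expectation_ge0.
have EF_fin : 'E_P[F] = (fine 'E_P[F])%:E.
  by rewrite fineK // ge0_fin_numE // (le_lt_trans hE) // ltry.
set m := fine 'E_P[F] in EF_fin *.
have m_ge0 : (0 <= m)%R by rewrite -lee_fin -EF_fin.
have m_le : (m <= 2 * expR (- M))%R by rewrite -lee_fin -EF_fin.
have Eexp_le : 'E_P[fun x => expR (F x)] <= 'E_P[fun x => 1 + expR M * F x]%R.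
  apply: expectation_le => //.
  - exact: measurableT_comp (@measurable_expR R) (measurable_funPT F).
  - by apply: measurable_funD => //; exact: measurable_funM.
  - by move=> x; rewrite addr_ge0 ?mulr_ge0 ?expR_ge0.
  - by apply: aeW => x; exact: expR_le1Dmul_expR.
apply: (le_trans Eexp_le).
rewrite ge0_expectation_affine ?expR_ge0 // EF_fin -EFinM -EFinD lee_fin.
rewrite lerD2l -mulrA self_le_sqrt_mul // mulr_ge0 ?expR_ge0 //=.
have expR_MN : (expR M * expR (- M) = 1)%R by rewrite -expRD subrr expR0.
have := expR_gt0 M; nra.
Qed.
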